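(* Let $c\ge 0$, $m\ge 2$, and let $x=((x^1,n_1),\dots,(x^q,n_q))$ be a profile with $q\ge 2$. Suppose candidate $i$ is located at $x^l$ and $n_l=2$. Then $$v_i(x^{l-},x_{-i})+v_i(x^{l+},x_{-i})=2v_i(x).$$ In particular, if $x$ is a non-convergent Nash equilibrium of the rule $s=(c,m)$, then $v_i(x^{l-},x_{-i})=v_i(x^{l+},x_{-i})=v_i(x)$.
   Context: Setting: voters' ideal points are distributed uniformly (unit mass, Lebesgue measure) on $[0,1]$. There are $m$ candidates; a profile is $x=(x_1,\dots,x_m)\in[0,1]^m$. A voter with ideal point $y$ ranks candidates by distance $|x_i-y|$ (closer is better); ties are broken by a fair lottery (uniformly random strict order among tied candidates). Under the best-worst rule $s=(c,m)$ ($c\ge0$), a candidate receives $1$ point from each voter ranking her first, $-c$ from each voter ranking her last ($m$-th), and $0$ otherwise; $v_i(x)$ is candidate $i$'s expected total points. $(t,x_{-i})$ denotes $x$ with $x_i$ replaced by $t$. For a point $p$, $v_i(p^-,x_{-i}):=\lim_{t\uparrow p}v_i(t,x_{-i})$ and $v_i(p^+,x_{-i}):=\lim_{t\downarrow p}v_i(t,x_{-i})$ (scores after an infinitesimal move just left, resp. right, of $p$). A (pure-strategy Nash) equilibrium is a profile $x^*$ with $v_i(x^* )\ge v_i(t,x^*_{-i})$ for all $i$ and $t\in[0,1]$; it is non-convergent if at least two platforms are distinct. A profile determines its distinct occupied positions $x^1<\dots<x^q$, with $n_j$ the number of candidates at $x^j$; we write $x=((x^1,n_1),\dots,(x^q,n_q))$.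 *)

From Stdlib Require Import Reals Lra List Classical ClassicalEpsilon.
Import ListNotations.
Open Scope R_scope.

(* A profile of m candidates is x : nat -> R; candidates are 0, ..., m-1. *)

Definition Reqb (a b : R) : bool := if Req_EM_T a b then true else false.
Definition Rltb (a b : R) : bool := if Rlt_dec a b then true else false.

Definition countc (m : nat) (p : nat -> bool) : nat := length (filter p (seq 0 m)).

Definition dist_c (x : nat -> R) (j : nat) (y : R) : R := Rabs (x j - y).

(* Probability (under fair tie-breaking lottery) that voter y ranks candidate i
   first: 1/k if i is among the k closest (tied) candidates, 0 otherwise. *)
Definition prob_first (m : nat) (x : nat -> R) (i : nat) (y : R) : R :=
  if existsb (fun j => Rltb (dist_c x j y) (dist_c x i y)) (seq 0 m) then 0
  else / INR (countc m (fun j => Reqb (dist_c x j y) (dist_c x i y))).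

Definition prob_last (m : nat) (x : nat -> R) (i : nat) (y : R) : R :=
  if existsb (fun j => Rltb (dist_c x i y) (dist_c x j y)) (seq 0 m) then 0
  else / INR (countc m (fun j => Reqb (dist_c x j y) (dist_c x i y))).

(* Expected points given to candidate i by voter y under the best-worst rule (c,m). *)
Definition voter_score (c : R) (m : nat) (x : nat -> R) (i : nat) (y : R) : R :=
  prob_first m x i y - c * prob_last m x i y.

(* Riemann integral over [0,1] (value independent of the integrability proof);
   0 if not integrable (never the case here: the integrand is a step function). *)
Definition integral01 (f : R -> R) : R :=
  match excluded_middle_informative (inhabited (Riemann_integrable f 0 1)) with
  | left h => RiemannInt (epsilon h (fun _ => True))
  | right _ => 0
  end.

(* v_i(x): expected total points of candidate i; voters uniform on [0,1]. *)
Definition score (c : R) (m : nat) (x : nat -> R) (i : nat) : R :=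
  integral01 (voter_score c m x i).

Definition upd (x : nat -> R) (i : nat) (t : R) : nat -> R :=
  fun j => if Nat.eq_dec j i then t else x j.

Definition is_profile (m : nat) (x : nat -> R) : Prop :=
  forall j, (j < m)%nat -> 0 <= x j <= 1.

Definition nash_eq (c : R) (m : nat) (x : nat -> R) : Prop :=
  is_profile m x /\
  forall j t, (j < m)%nat -> 0 <= t <= 1 -> score c m (upd x j t) j <= score c m x j.

Definition non_convergent (m : nat) (x : nat -> R) : Prop :=
  exists j k, (j < m)%nat /\ (k < m)%nat /\ x j <> x k.

(* v_i(p^-, x_{-i}) = L  and  v_i(p^+, x_{-i}) = L *)
Definition left_lim (c : R) (m : nat) (x : nat -> R) (i : nat) (p L : R) : Prop :=
  limit1_in (fun t => score c m (upd x i t) i) (fun t => t < p) L p.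
Definition right_lim (c : R) (m : nat) (x : nat -> R) (i : nat) (p L : R) : Prop :=
  limit1_in (fun t => score c m (upd x i t) i) (fun t => p < t) L p.

From Stdlib Require Import Reals Lra Lia List Classical ClassicalEpsilon.
From Stdlib Require ROrderedType.
Import ROrderedType (Rcompare, Rcompare_spec).
From Coquelicot Require Import Coquelicot.
Import ListNotations.
Open Scope R_scope.

(* Let [k] be the other candidate at [p = x i].  When [i] moves to a nearby [t], the
   ranking of every voter [y] that is farther than [|t - p|] from [p] and from all the
   midpoints [(x j + p)/2] changes in one respect only: the tie between [i] and [k] is
   broken, in favour of [i] if [y] is on the same side of [p] as [t] and against her
   otherwise.  So on the side of [t] her first-place share doubles and her last-place
   share vanishes, and on the other side the reverse happens.  All shares are step
   functions with finitely many breakpoints, so the remaining voters have measure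
   [O(|t - p|)] and [v_i(t, x_{-i})] converges to the integral of the corresponding
   one-sided integrand.  The two integrands add up to twice the voter score.  At an
   equilibrium neither one-sided limit exceeds [v_i(x)], so both equal it; at an endpoint
   of [0,1] the only available side would double [i]'s first-place share, which is
   positive since [p] is isolated from the other positions. *)

(** * Step functions and their integrals *)

Lemma integral01_RInt (f : R -> R) : ex_RInt f 0 1 -> integral01 f = RInt f 0 1.
Proof.
  intros Hf; unfold integral01.
  destruct (excluded_middle_informative _) as [h|h].
  - rewrite (RInt_Reals f 0 1 (epsilon h (fun _ => True))); reflexivity.
  - exfalso; apply h; constructor; apply ex_RInt_Reals_0, Hf.
Qed.

Definition piecewise_constant (P : list R) (f : R -> R) : Prop :=
  forall u v, (forall q, In q P -> ~ u < q < v) ->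
  forall y y', u < y < v -> u < y' < v -> f y = f y'.

Lemma ex_RInt_locally_constant (P : list R) (f : R -> R) (a b : R) : a <= b ->
  (forall u v, a <= u -> v <= b -> (forall q, In q P -> ~ u < q < v) ->
     forall y y', u < y < v -> u < y' < v -> f y = f y') ->
  ex_RInt f a b.
Proof.
  revert a b; induction P as [|q P IH]; intros a b Hab Hf.
  - destruct (Req_dec a b) as [<-|Hne]; [apply ex_RInt_point|].
    apply (ex_RInt_ext (fun _ => f ((a + b) / 2))); [|apply ex_RInt_const].
    intros y Hy; rewrite Rmin_left, Rmax_right in Hy by lra.
    apply (Hf a b); [lra|lra|intros _ []|lra|lra].
  - assert (Hsub : forall a' b', a <= a' -> b' <= b -> ~ a' < q < b' ->
              ex_RInt f a' b' \/ b' < a').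
    { intros a' b' Ha Hb Hq. destruct (Rle_lt_dec a' b') as [Hab'|]; [left|now right].
      apply IH; [exact Hab'|]. intros u v Hu Hv HP. apply Hf; [lra|lra|].
      intros q' [<-|Hq']; [lra|auto]. }
    destruct (classic (a < q < b)) as [Hq|Hq].
    + apply (ex_RInt_Chasles f a q b).
      * destruct (Hsub a q) as [H|H]; auto; lra.
      * destruct (Hsub q b) as [H|H]; auto; lra.
    + destruct (Hsub a b) as [H|H]; auto; lra.
Qed.

Lemma ex_RInt_piecewise_constant P f a b : piecewise_constant P f -> ex_RInt f a b.
Proof.
  intros Hf. destruct (Rle_lt_dec a b) as [Hab|Hab]; [|apply ex_RInt_swap];
    apply (ex_RInt_locally_constant P); try lra; intros u v _ _; apply Hf.
Qed.

Lemma piecewise_constant_incl P P' f :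
  incl P P' -> piecewise_constant P f -> piecewise_constant P' f.
Proof. intros HP Hf u v Huv; apply Hf; intros q Hq; apply Huv, HP, Hq. Qed.

Lemma piecewise_constant_comb P (op : R -> R -> R) f g :
  piecewise_constant P f -> piecewise_constant P g ->
  piecewise_constant P (fun y => op (f y) (g y)).
Proof.
  intros Hf Hg u v Huv y y' Hy Hy'.
  now rewrite (Hf u v Huv y y' Hy Hy'), (Hg u v Huv y y' Hy Hy').
Qed.

Lemma piecewise_constant_if P p f g : In p P ->
  piecewise_constant P f -> piecewise_constant P g ->
  piecewise_constant P (fun y => if Rlt_dec p y then f y else g y).
Proof.
  intros Hp Hf Hg u v Huv y y' Hy Hy'. pose proof (Huv p Hp).
  destruct (Rlt_dec p y), (Rlt_dec p y'); try lra.
  - exact (Hf u v Huv y y' Hy Hy').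
  - exact (Hg u v Huv y y' Hy Hy').
Qed.

Lemma RInt_Chasles3 (f : R -> R) a b c d : a <= b <= c -> c <= d -> ex_RInt f a d ->
  RInt f a d = RInt f a b + RInt f b c + RInt f c d.
Proof.
  intros Hbc Hcd Hf.
  assert (Hab : ex_RInt f a b) by (apply (ex_RInt_Chasles_1 f a b d); auto; lra).
  assert (Hbd : ex_RInt f b d) by (apply (ex_RInt_Chasles_2 f a b d); auto; lra).
  assert (Hbc' : ex_RInt f b c) by (apply (ex_RInt_Chasles_1 f b c d); auto; lra).
  assert (Hcd' : ex_RInt f c d) by (apply (ex_RInt_Chasles_2 f b c d); auto; lra).
  rewrite <- (RInt_Chasles f a b d Hab Hbd), <- (RInt_Chasles f b c d Hbc' Hcd').
  unfold plus; simpl; ring.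
Qed.

Lemma RInt_le_const (f : R -> R) a b k : a <= b -> ex_RInt f a b ->
  (forall y, a < y < b -> f y <= k) -> RInt f a b <= (b - a) * k.
Proof.
  intros Hab Hf Hk. replace ((b - a) * k) with (RInt (fun _ => k) a b)
    by (rewrite RInt_const; reflexivity).
  apply RInt_le; auto. apply ex_RInt_const.
Qed.

Lemma RInt_ge_const (f : R -> R) a b k : a <= b -> ex_RInt f a b ->
  (forall y, a < y < b -> k <= f y) -> (b - a) * k <= RInt f a b.
Proof.
  intros Hab Hf Hk. replace ((b - a) * k) with (RInt (fun _ => k) a b)
    by (rewrite RInt_const; reflexivity).
  apply RInt_le; auto. apply ex_RInt_const.
Qed.

Lemma RInt_ge_plateau (g : R -> R) a b k : 0 <= a <= b -> b <= 1 -> ex_RInt g 0 1 ->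
  (forall y, 0 < y < 1 -> 0 <= g y) -> (forall y, a < y < b -> k <= g y) ->
  (b - a) * k <= RInt g 0 1.
Proof.
  intros Hab Hb Hg H0 Hk. rewrite (RInt_Chasles3 g 0 a b 1) by (auto; lra).
  assert (I : ex_RInt g a b) by (apply (ex_RInt_Chasles_1 g a b 1); [lra|];
    apply (ex_RInt_Chasles_2 g 0 a 1); auto; lra).
  pose proof (RInt_ge_const g a b k ltac:(lra) I Hk).
  pose proof (RInt_ge_const g 0 a 0 ltac:(lra)
    ltac:(apply (ex_RInt_Chasles_1 g 0 a 1); auto; lra) ltac:(intros; apply H0; lra)).
  pose proof (RInt_ge_const g b 1 0 ltac:(lra)
    ltac:(apply (ex_RInt_Chasles_2 g 0 b 1); auto; lra) ltac:(intros; apply H0; lra)).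
  lra.
Qed.

Definition band (d h y : R) : R := if Rle_dec (Rabs (y - d)) h then 1 else 0.

Lemma band_piecewise_constant d h : piecewise_constant [d - h; d + h] (band d h).
Proof.
  intros u v Huv y y' Hy Hy'. unfold band.
  pose proof (Huv (d - h) ltac:(simpl; auto)). pose proof (Huv (d + h) ltac:(simpl; auto)).
  destruct (Rle_dec (Rabs (y - d)) h) as [Hl|Hl], (Rle_dec (Rabs (y' - d)) h) as [Hl'|Hl'];
    auto; exfalso; revert Hl Hl'; unfold Rabs; repeat destruct Rcase_abs; intros; lra.
Qed.

Lemma RInt_band_le d h : 0 <= h -> RInt (band d h) 0 1 <= 2 * h.
Proof.
  intros Hh.
  set (a := Rmax 0 (Rmin 1 (d - h))). set (b := Rmax a (Rmin 1 (d + h))).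
  assert (Ha : 0 <= a <= 1) by (unfold a, Rmax, Rmin; repeat destruct Rle_dec; lra).
  assert (Hb : a <= b <= 1) by (unfold b, Rmax, Rmin; repeat destruct Rle_dec; lra).
  assert (Hba : b - a <= 2 * h) by (unfold b, a, Rmax, Rmin; repeat destruct Rle_dec; lra).
  assert (I : forall u v, ex_RInt (band d h) u v)
    by (intros; apply ex_RInt_piecewise_constant with (1 := band_piecewise_constant d h)).
  rewrite (RInt_Chasles3 _ 0 a b 1) by (auto; lra).
  assert (Hout : forall y, (0 < y < a \/ b < y < 1) -> band d h y = 0).
  { intros y Hy. unfold band. destruct Rle_dec as [Hl|]; auto. exfalso. revert Hl Hy.
    unfold b, a, Rmax, Rmin, Rabs; repeat destruct Rle_dec; repeat destruct Rcase_abs;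
      intros; lra. }
  pose proof (RInt_le_const (band d h) 0 a 0 ltac:(lra) (I 0 a)
    ltac:(intros y Hy; rewrite Hout; lra)).
  pose proof (RInt_le_const (band d h) a b 1 ltac:(lra) (I a b)
    ltac:(intros y _; unfold band; destruct Rle_dec; lra)).
  pose proof (RInt_le_const (band d h) b 1 0 ltac:(lra) (I b 1)
    ltac:(intros y Hy; rewrite Hout; lra)).
  lra.
Qed.

Fixpoint bands (D : list R) (h y : R) : R :=
  match D with [] => 0 | d :: D' => band d h y + bands D' h y end.

Lemma ex_RInt_bands D h : ex_RInt (bands D h) 0 1.
Proof.
  induction D as [|d D IH]; simpl; [apply ex_RInt_const|].
  apply (ex_RInt_plus (band d h)); auto.
  apply ex_RInt_piecewise_constant with (1 := band_piecewise_constant d h).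
Qed.

Lemma RInt_bands_le D h : 0 <= h -> RInt (bands D h) 0 1 <= INR (length D) * (2 * h).
Proof.
  intros Hh. induction D as [|d D IH]; cbn [bands length].
  - rewrite RInt_const. unfold scal; simpl; unfold mult; simpl; lra.
  - pose proof (RInt_plus (band d h) (bands D h) 0 1
      ltac:(apply ex_RInt_piecewise_constant with (1 := band_piecewise_constant d h))
      (ex_RInt_bands D h)) as E.
    unfold plus in E; simpl in E. rewrite E, S_INR.
    pose proof (RInt_band_le d h Hh). lra.
Qed.

Lemma bands_ge0 D h y : 0 <= bands D h y.
Proof. induction D; simpl; [lra|unfold band; destruct Rle_dec; lra]. Qed.

Lemma bands_ge1 D h y d : In d D -> Rabs (y - d) <= h -> 1 <= bands D h y.
Proof.
  induction D as [|d' D IH]; simpl; [tauto|]. intros [<-|Hd] Hy.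
  - unfold band. destruct Rle_dec; [|lra]. pose proof (bands_ge0 D h y). lra.
  - pose proof (IH Hd Hy). unfold band. destruct Rle_dec; lra.
Qed.

Lemma abs_RInt_le_near_points (D : list R) (h M : R) (g : R -> R) : 0 <= h ->
  ex_RInt g 0 1 -> (forall y, 0 < y < 1 -> Rabs (g y) <= M) ->
  (forall y, 0 < y < 1 -> (forall d, In d D -> h < Rabs (y - d)) -> g y = 0) ->
  Rabs (RInt g 0 1) <= M * (INR (length D) * (2 * h)).
Proof.
  intros Hh Hg Hb Hz.
  assert (HM : 0 <= M) by (pose proof (Hb (1/2) ltac:(lra)); pose proof (Rabs_pos (g (1/2))); lra).
  assert (Hd : forall y, 0 < y < 1 -> Rabs (g y) <= M * bands D h y).
  { intros y Hy. destruct (classic (exists d, In d D /\ Rabs (y - d) <= h)) as [[d [Hd Hyd]]|E].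
    - pose proof (bands_ge1 D h y d Hd Hyd).
      apply Rle_trans with (M * 1); [rewrite Rmult_1_r; auto|].
      apply Rmult_le_compat_l; auto.
    - rewrite Hz by (auto; intros d Hd; apply Rnot_le_lt; intros Hyd; eauto).
      rewrite Rabs_R0. apply Rmult_le_pos; [auto|apply bands_ge0]. }
  assert (IM : ex_RInt (fun y => M * bands D h y) 0 1)
    by apply (ex_RInt_scal _ _ _ _ (ex_RInt_bands D h)).
  assert (EM : RInt (fun y => M * bands D h y) 0 1 <= M * (INR (length D) * (2 * h))).
  { pose proof (RInt_scal (bands D h) 0 1 M (ex_RInt_bands D h)) as E.
    unfold scal in E; simpl in E; unfold mult in E; simpl in E. rewrite E.
    apply Rmult_le_compat_l; auto. apply RInt_bands_le, Hh. }
  apply Rabs_le; split.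
  - pose proof (RInt_opp (fun y => M * bands D h y) 0 1 IM) as E.
    unfold opp in E; simpl in E.
    assert (Iop : ex_RInt (fun y => - (M * bands D h y)) 0 1) by apply (ex_RInt_opp _ _ _ IM).
    assert (RInt (fun y => - (M * bands D h y)) 0 1 <= RInt g 0 1).
    { apply RInt_le; auto; [lra|]. intros y Hy. pose proof (Hd y Hy).
      pose proof (Rle_abs (- g y)). rewrite Rabs_Ropp in *. lra. }
    lra.
  - eapply Rle_trans; [|exact EM].
    apply RInt_le; auto; [lra|]. intros y Hy. pose proof (Hd y Hy). pose proof (Rle_abs (g y)). lra.
Qed.

(** * Tie-breaking lotteries *)

Lemma countc_ext m (p q : nat -> bool) :
  (forall j, (j < m)%nat -> p j = q j) -> countc m p = countc m q.
Proof.
  unfold countc. induction m as [|m IH]; intros H; auto.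
  rewrite seq_S, !filter_app, !length_app. rewrite IH by (intros; apply H; lia).
  simpl. rewrite H by lia. reflexivity.
Qed.

Lemma existsb_seq_ext m (p q : nat -> bool) :
  (forall j, (j < m)%nat -> p j = q j) -> existsb p (seq 0 m) = existsb q (seq 0 m).
Proof.
  induction m as [|m IH]; intros H; auto.
  rewrite seq_S, !existsb_app, IH by (intros; apply H; lia). simpl. rewrite H by lia. reflexivity.
Qed.

Lemma countc_S m (p : nat -> bool) :
  countc (S m) p = (countc m p + if p m then 1 else 0)%nat.
Proof. unfold countc. rewrite seq_S, filter_app, length_app. simpl. now destruct (p m). Qed.

Lemma countc_eqb m i : (i < m)%nat -> countc m (fun j => Nat.eqb j i) = 1%nat.
Proof.
  induction m as [|m IH]; intros Hi; [lia|]. rewrite countc_S.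
  destruct (Nat.eq_dec i m) as [->|Hn].
  - rewrite Nat.eqb_refl, (countc_ext m _ (fun _ => false)).
    + unfold countc. induction (seq 0 m); auto.
    + intros j Hj. apply Nat.eqb_neq. lia.
  - rewrite IH by lia. replace (Nat.eqb m i) with false by (symmetry; apply Nat.eqb_neq; lia).
    reflexivity.
Qed.

Lemma Rcompare_eq a : a = 0 -> Rcompare a 0 = Eq.
Proof. intros. destruct (Rcompare_spec a 0); auto; lra. Qed.

Lemma Rcompare_eq_inv a : Rcompare a 0 = Eq -> a = 0.
Proof. destruct (Rcompare_spec a 0); congruence. Qed.

Lemma Rcompare_gt a : 0 < a -> Rcompare a 0 = Gt.
Proof. intros. destruct (Rcompare_spec a 0); auto; lra. Qed.

Lemma Rcompare_lt a : a < 0 -> Rcompare a 0 = Lt.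
Proof. intros. destruct (Rcompare_spec a 0); auto; lra. Qed.

Lemma Rcompare_mul_same_sign a a' b b' : 0 < a * a' -> 0 < b * b' ->
  Rcompare (a * b) 0 = Rcompare (a' * b') 0.
Proof.
  intros Ha Hb. assert (H : 0 < (a * b) * (a' * b')).
  { replace ((a * b) * (a' * b')) with ((a * a') * (b * b')) by ring.
    apply Rmult_lt_0_compat; auto. }
  destruct (Rcompare_spec (a * b) 0) as [E|E|E], (Rcompare_spec (a' * b') 0) as [E'|E'|E'];
    auto; exfalso; try (rewrite E in H || rewrite E' in H); nra.
Qed.

Lemma mul_shift_pos a e : Rabs e < Rabs a -> 0 < a * (a + e).
Proof. unfold Rabs; repeat destruct Rcase_abs; intros; nra. Qed.

Definition beaten (m : nat) (s : nat -> comparison) : bool :=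
  existsb (fun j => match s j with Lt => true | _ => false end) (seq 0 m).

Definition ties (m : nat) (s : nat -> comparison) : nat :=
  countc m (fun j => match s j with Eq => true | _ => false end).

(* [s j] compares the distance to candidate [j] with the distance to the candidate
   under consideration; [share_first m s] is then her chance to be ranked first. *)
Definition share_first (m : nat) (s : nat -> comparison) : R :=
  if beaten m s then 0 else / INR (ties m s).

Definition dist_cmp (X : nat -> R) (i : nat) (y : R) (j : nat) : comparison :=
  Rcompare (dist_c X j y) (dist_c X i y).

Lemma Rltb_Rcompare a b : Rltb a b = match Rcompare a b with Lt => true | _ => false end.
Proof. unfold Rltb; destruct Rlt_dec, (Rcompare_spec a b); auto; lra. Qed.

Lemma Rltb_Rcompare_opp a b :
  Rltb b a = match CompOpp (Rcompare a b) with Lt => true | _ => false end.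
Proof. unfold Rltb; destruct Rlt_dec, (Rcompare_spec a b); auto; lra. Qed.

Lemma Reqb_Rcompare a b : Reqb a b = match Rcompare a b with Eq => true | _ => false end.
Proof. unfold Reqb; destruct (Req_EM_T a b), (Rcompare_spec a b); auto; lra. Qed.

Lemma Reqb_true a b : Reqb a b = true <-> a = b.
Proof. unfold Reqb. destruct Req_EM_T; split; congruence. Qed.

Lemma prob_first_share m X i y : prob_first m X i y = share_first m (dist_cmp X i y).
Proof.
  unfold prob_first, share_first, beaten, ties, dist_cmp.
  rewrite (existsb_seq_ext m _ (fun j => match Rcompare (dist_c X j y) (dist_c X i y) with
    Lt => true | _ => false end)) by (intros; apply Rltb_Rcompare).
  rewrite (countc_ext m _ (fun j => match Rcompare (dist_c X j y) (dist_c X i y) with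
    Eq => true | _ => false end)) by (intros; apply Reqb_Rcompare).
  reflexivity.
Qed.

Lemma prob_last_share m X i y :
  prob_last m X i y = share_first m (fun j => CompOpp (dist_cmp X i y j)).
Proof.
  unfold prob_last, share_first, beaten, ties, dist_cmp.
  rewrite (existsb_seq_ext m _ (fun j => match CompOpp (Rcompare (dist_c X j y) (dist_c X i y))
    with Lt => true | _ => false end)) by (intros; apply Rltb_Rcompare_opp).
  rewrite (countc_ext m _ (fun j => match CompOpp (Rcompare (dist_c X j y) (dist_c X i y)) with
    Eq => true | _ => false end)) by (intros; rewrite Reqb_Rcompare; now destruct Rcompare).
  reflexivity.
Qed.

Lemma share_first_ext m s s' :
  (forall j, (j < m)%nat -> s j = s' j) -> share_first m s = share_first m s'.
Proof.
  intros H. unfold share_first, beaten, ties.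
  rewrite (existsb_seq_ext m _ (fun j => match s' j with Lt => true | _ => false end)),
    (countc_ext m _ (fun j => match s' j with Eq => true | _ => false end));
    [reflexivity| |]; intros j Hj; now rewrite H.
Qed.

Lemma share_first_bounds m s : 0 <= share_first m s <= 1.
Proof.
  unfold share_first. destruct beaten; [lra|]. destruct (ties m s) as [|n].
  - simpl. rewrite Rinv_0. lra.
  - rewrite S_INR. pose proof (pos_INR n). split.
    + apply Rlt_le, Rinv_0_lt_compat. lra.
    + rewrite <- Rinv_1. apply Rinv_le_contravar; lra.
Qed.

Lemma share_first_beaten m s k : (k < m)%nat -> s k = Lt -> share_first m s = 0.
Proof.
  intros Hk Hs. unfold share_first, beaten.
  replace (existsb _ _) with true; [reflexivity|].
  symmetry. apply existsb_exists. exists k. rewrite in_seq, Hs. split; [lia|reflexivity].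
Qed.

Lemma share_first_unbeaten m s :
  (forall j, (j < m)%nat -> s j <> Lt) -> share_first m s = / INR (ties m s).
Proof.
  intros H. unfold share_first, beaten.
  replace (existsb _ _) with false; [reflexivity|].
  symmetry. apply Bool.not_true_iff_false. rewrite existsb_exists.
  intros [j [Hj Hlt]]. apply in_seq in Hj.
  specialize (H j ltac:(lia)). destruct (s j); congruence.
Qed.

Lemma share_first_tie_broken m s s' :
  (forall j, (j < m)%nat -> s' j = s j \/ (s j = Eq /\ s' j = Gt)) ->
  ties m s = 2%nat -> ties m s' = 1%nat -> share_first m s' = 2 * share_first m s.
Proof.
  intros H H2 H1. unfold share_first. rewrite H2, H1.
  replace (beaten m s') with (beaten m s).
  - destruct (beaten m s); simpl; field.
  - apply existsb_seq_ext. intros j Hj. now destruct (H j Hj) as [->|[-> ->]].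
Qed.

Lemma ties_CompOpp m s : ties m (fun j => CompOpp (s j)) = ties m s.
Proof. apply countc_ext. intros j _. now destruct (s j). Qed.

Lemma ties_countc m s (p : nat -> bool) :
  (forall j, (j < m)%nat -> s j = Eq <-> p j = true) -> ties m s = countc m p.
Proof.
  intros H. apply countc_ext. intros j Hj. specialize (H j Hj).
  destruct (s j), (p j); intuition discriminate.
Qed.

(* [gap X i j y] is [(X j - y)^2 - (X i - y)^2]. *)
Definition gap (X : nat -> R) (i j : nat) (y : R) : R := (X j - X i) * (X j + X i - 2 * y).

Lemma dist_cmp_gap X i y j : dist_cmp X i y j = Rcompare (gap X i j y) 0.
Proof.
  unfold dist_cmp, dist_c, gap.
  replace ((X j - X i) * (X j + X i - 2 * y)) with
    (Rsqr (Rabs (X j - y)) - Rsqr (Rabs (X i - y)))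
    by (rewrite <- !Rsqr_abs; unfold Rsqr; ring).
  unfold Rsqr.
  pose proof (Rabs_pos (X j - y)). pose proof (Rabs_pos (X i - y)).
  destruct (Rcompare_spec (Rabs (X j - y)) (Rabs (X i - y))) as [E|E|E];
    symmetry; [apply Rcompare_eq; rewrite E; ring|apply Rcompare_lt|apply Rcompare_gt]; nra.
Qed.

Lemma dist_cmp_same_position X i y j : X j = X i -> dist_cmp X i y j = Eq.
Proof. intros E. rewrite dist_cmp_gap. unfold gap. apply Rcompare_eq. rewrite E. ring. Qed.

(** * Scores as integrals of step functions *)

Definition midpoints (X : nat -> R) (i m : nat) : list R :=
  map (fun j => (X j + X i) / 2) (seq 0 m).

Lemma in_midpoints X i m j : (j < m)%nat -> In ((X j + X i) / 2) (midpoints X i m).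
Proof. intros Hj. apply (in_map (fun j => (X j + X i) / 2)), in_seq. lia. Qed.

Lemma dist_cmp_locally_constant m X i u v y y' :
  (forall q, In q (midpoints X i m) -> ~ u < q < v) -> u < y < v -> u < y' < v ->
  forall j, (j < m)%nat -> dist_cmp X i y j = dist_cmp X i y' j.
Proof.
  intros Huv Hy Hy' j Hj. rewrite !dist_cmp_gap. unfold gap.
  destruct (Req_dec (X j) (X i)) as [E|E]; [now rewrite E, Rminus_diag, !Rmult_0_l|].
  pose proof (Huv _ (in_midpoints X i m j Hj)).
  apply Rcompare_mul_same_sign.
  - assert (X j - X i <> 0) by lra. nra.
  - destruct (Rle_lt_dec ((X j + X i) / 2) u); [|assert (v <= (X j + X i) / 2) by lra]; nra.
Qed.

Lemma prob_first_piecewise_constant m X i :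
  piecewise_constant (midpoints X i m) (prob_first m X i).
Proof.
  intros u v Huv y y' Hy Hy'. rewrite !prob_first_share. apply share_first_ext.
  exact (dist_cmp_locally_constant m X i u v y y' Huv Hy Hy').
Qed.

Lemma prob_last_piecewise_constant m X i :
  piecewise_constant (midpoints X i m) (prob_last m X i).
Proof.
  intros u v Huv y y' Hy Hy'. rewrite !prob_last_share. apply share_first_ext.
  intros j Hj. f_equal. exact (dist_cmp_locally_constant m X i u v y y' Huv Hy Hy' j Hj).
Qed.

Lemma voter_score_piecewise_constant c m X i :
  piecewise_constant (midpoints X i m) (voter_score c m X i).
Proof.
  apply (piecewise_constant_comb _ (fun a b => a - c * b));
    [apply prob_first_piecewise_constant|apply prob_last_piecewise_constant].
Qed.

Lemma voter_score_bound c m X i y : 0 <= c -> Rabs (voter_score c m X i y) <= 1 + c.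
Proof.
  intros Hc. unfold voter_score. rewrite prob_first_share, prob_last_share.
  pose proof (share_first_bounds m (dist_cmp X i y)).
  pose proof (share_first_bounds m (fun j => CompOpp (dist_cmp X i y j))).
  apply Rabs_le. split; nra.
Qed.

Lemma ex_RInt_voter_score c m X i a b : ex_RInt (voter_score c m X i) a b.
Proof. exact (ex_RInt_piecewise_constant _ _ a b (voter_score_piecewise_constant c m X i)). Qed.

Lemma score_RInt c m X i : score c m X i = RInt (voter_score c m X i) 0 1.
Proof. apply integral01_RInt, ex_RInt_voter_score. Qed.

Lemma score_near_RInt c m X i (g : R -> R) (D : list R) (h B : R) : 0 <= c -> 0 <= h ->
  ex_RInt g 0 1 -> (forall y, 0 < y < 1 -> Rabs (g y) <= B) ->
  (forall y, 0 < y < 1 -> (forall d, In d D -> h < Rabs (y - d)) ->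
     voter_score c m X i y = g y) ->
  Rabs (score c m X i - RInt g 0 1) <= (1 + c + B) * (INR (length D) * (2 * h)).
Proof.
  intros Hc Hh Hg HB Heq. rewrite score_RInt.
  pose proof (RInt_minus (voter_score c m X i) g 0 1 (ex_RInt_voter_score c m X i 0 1) Hg) as E.
  unfold minus, plus, opp in E; simpl in E. unfold Rminus; rewrite <- E.
  apply abs_RInt_le_near_points; auto.
  - apply (ex_RInt_minus (voter_score c m X i) g); auto. apply ex_RInt_voter_score.
  - intros y Hy. pose proof (voter_score_bound c m X i y Hc). pose proof (HB y Hy).
    pose proof (Rabs_triang (voter_score c m X i y) (- g y)). rewrite Rabs_Ropp in *. lra.
  - intros y Hy Hfar. rewrite Heq by auto. ring.
Qed.

Definition right_integrand c m x i (y : R) : R :=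
  if Rlt_dec (x i) y then 2 * prob_first m x i y else - (2 * c * prob_last m x i y).

Definition left_integrand c m x i (y : R) : R :=
  2 * voter_score c m x i y - right_integrand c m x i y.

Lemma right_integrand_right c m x i y : x i < y ->
  right_integrand c m x i y = 2 * prob_first m x i y.
Proof. intros H. unfold right_integrand. now destruct Rlt_dec. Qed.

Lemma left_integrand_left c m x i y : y < x i ->
  left_integrand c m x i y = 2 * prob_first m x i y.
Proof.
  intros H. unfold left_integrand, right_integrand, voter_score.
  destruct Rlt_dec; [lra|ring].
Qed.

Lemma ex_RInt_right_integrand c m x i : ex_RInt (right_integrand c m x i) 0 1.
Proof.
  apply (ex_RInt_piecewise_constant (x i :: midpoints x i m)).
  assert (Hincl : incl (midpoints x i m) (x i :: midpoints x i m)) by (intros q; now right).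
  unfold right_integrand. apply piecewise_constant_if; [now left| |].
  - apply (piecewise_constant_comb _ (fun a _ => 2 * a) _ (prob_first m x i));
      apply (piecewise_constant_incl _ _ _ Hincl), prob_first_piecewise_constant.
  - apply (piecewise_constant_comb _ (fun a _ => - (2 * c * a)) _ (prob_last m x i));
      apply (piecewise_constant_incl _ _ _ Hincl), prob_last_piecewise_constant.
Qed.

Lemma ex_RInt_left_integrand c m x i : ex_RInt (left_integrand c m x i) 0 1.
Proof.
  apply (ex_RInt_minus (fun y => 2 * voter_score c m x i y)).
  - apply (ex_RInt_scal (voter_score c m x i) 0 1 2), ex_RInt_voter_score.
  - apply ex_RInt_right_integrand.
Qed.

Lemma RInt_left_plus_right_integrand c m x i :
  RInt (left_integrand c m x i) 0 1 + RInt (right_integrand c m x i) 0 1 = 2 * score c m x i.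
Proof.
  unfold left_integrand.
  pose proof (RInt_minus (fun y => 2 * voter_score c m x i y) (right_integrand c m x i) 0 1
    (ex_RInt_scal (voter_score c m x i) 0 1 2 (ex_RInt_voter_score c m x i 0 1))
    (ex_RInt_right_integrand c m x i)) as E.
  pose proof (RInt_scal (voter_score c m x i) 0 1 2 (ex_RInt_voter_score c m x i 0 1)) as E'.
  unfold minus, plus, opp, scal in E, E'; simpl in E, E'. unfold mult in E'; simpl in E'.
  unfold Rminus. rewrite E, E', score_RInt. ring.
Qed.

Lemma right_integrand_bound c m x i y : 0 <= c -> Rabs (right_integrand c m x i y) <= 2 + 2 * c.
Proof.
  intros Hc. unfold right_integrand. rewrite prob_first_share, prob_last_share.
  pose proof (share_first_bounds m (dist_cmp x i y)).
  pose proof (share_first_bounds m (fun j => CompOpp (dist_cmp x i y j))).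
  destruct Rlt_dec; apply Rabs_le; split; nra.
Qed.

Lemma left_integrand_bound c m x i y : 0 <= c -> Rabs (left_integrand c m x i y) <= 4 + 4 * c.
Proof.
  intros Hc. unfold left_integrand, Rminus.
  pose proof (voter_score_bound c m x i y Hc). pose proof (right_integrand_bound c m x i y Hc).
  pose proof (Rabs_triang (2 * voter_score c m x i y) (- right_integrand c m x i y)).
  rewrite Rabs_Ropp, Rabs_mult, (Rabs_pos_eq 2) in * by lra. lra.
Qed.

(** * Moving one of two candidates sharing a position *)

Lemma limit1_in_of_linear_bound (f : R -> R) (D : R -> Prop) (L p K a : R) :
  0 < a -> 0 <= K ->
  (forall t, D t -> Rabs (t - p) < a -> Rabs (f t - L) <= K * Rabs (t - p)) ->
  limit1_in f D L p.
Proof.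
  intros Ha HK H eps Heps.
  assert (He : 0 < eps / (K + 1)) by (apply Rdiv_lt_0_compat; lra).
  exists (Rmin a (eps / (K + 1))). split; [now apply Rmin_glb_lt|].
  intros t [Ht Hd]. simpl in *. unfold R_dist in *.
  pose proof (Rmin_l a (eps / (K + 1))). pose proof (Rmin_r a (eps / (K + 1))).
  pose proof (H t Ht ltac:(lra)).
  assert (K * Rabs (t - p) <= K * (eps / (K + 1))) by (apply Rmult_le_compat_l; lra).
  assert (K * (eps / (K + 1)) = eps - eps / (K + 1)) by (field; lra).
  lra.
Qed.

Lemma limit1_in_le (f : R -> R) (D : R -> Prop) (L p v : R) : limit1_in f D L p ->
  (forall d, 0 < d -> exists t, D t /\ Rabs (t - p) < d /\ f t <= v) -> L <= v.
Proof.
  intros Hlim Hnear. apply Rnot_lt_le. intros Hlt.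
  destruct (Hlim (L - v) ltac:(lra)) as [d [Hd Hball]].
  destruct (Hnear d Hd) as [t [Ht [Htp Hft]]].
  pose proof (Hball t (conj Ht Htp)) as Hf. simpl in Hf. unfold R_dist in Hf.
  apply Rabs_def2 in Hf. lra.
Qed.

Lemma separation_radius m (x : nat -> R) p : exists dl, 0 < dl <= 1 /\
  forall j, (j < m)%nat -> x j <> p -> dl <= Rabs (x j - p).
Proof.
  induction m as [|m [dl [Hdl H]]].
  - exists 1. split; [lra|intros; lia].
  - destruct (Req_dec (x m) p) as [E|E].
    + exists dl. split; auto. intros j Hj Hn.
      destruct (Nat.eq_dec j m) as [->|]; [congruence|apply H; auto; lia].
    + exists (Rmin dl (Rabs (x m - p))).
      assert (0 < Rabs (x m - p)) by (apply Rabs_pos_lt; lra).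
      pose proof (Rmin_l dl (Rabs (x m - p))). pose proof (Rmin_r dl (Rabs (x m - p))).
      split; [split; [apply Rmin_glb_lt|]; lra|].
      intros j Hj Hn. destruct (Nat.eq_dec j m) as [->|]; [lra|].
      pose proof (H j ltac:(lia) Hn). lra.
Qed.

Lemma left_lim_le_score c m x i L : (i < m)%nat -> nash_eq c m x -> 0 < x i ->
  left_lim c m x i (x i) L -> L <= score c m x i.
Proof.
  intros Hi [Hprof Hbest] Hp0 HL. pose proof (Hprof i Hi).
  apply (limit1_in_le _ _ _ _ _ HL). intros d Hd.
  pose proof (Rmin_l d (x i)). pose proof (Rmin_r d (x i)).
  pose proof (Rmin_glb_lt d (x i) 0 Hd Hp0).
  exists (x i - Rmin d (x i) / 2). split; [lra|split].
  - rewrite Rabs_left; lra.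
  - apply Hbest; auto; lra.
Qed.

Lemma right_lim_le_score c m x i L : (i < m)%nat -> nash_eq c m x -> x i < 1 ->
  right_lim c m x i (x i) L -> L <= score c m x i.
Proof.
  intros Hi [Hprof Hbest] Hp1 HR. pose proof (Hprof i Hi).
  apply (limit1_in_le _ _ _ _ _ HR). intros d Hd.
  pose proof (Rmin_l d (1 - x i)). pose proof (Rmin_r d (1 - x i)).
  pose proof (Rmin_glb_lt d (1 - x i) 0 Hd ltac:(lra)).
  exists (x i + Rmin d (1 - x i) / 2). split; [lra|split].
  - rewrite Rabs_pos_eq; lra.
  - apply Hbest; auto; lra.
Qed.

Lemma upd_same x i t : upd x i t i = t.
Proof. unfold upd. destruct Nat.eq_dec; congruence. Qed.

Lemma upd_other x i t j : j <> i -> upd x i t j = x j.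
Proof. unfold upd. destruct Nat.eq_dec; congruence. Qed.

Section Twin.

Variables (m : nat) (x : nat -> R) (i : nat).
Hypothesis Hi : (i < m)%nat.
Hypothesis Htwin : countc m (fun j => Reqb (x j) (x i)) = 2%nat.

Lemma twin_exists : exists k, (k < m)%nat /\ k <> i /\ x k = x i.
Proof.
  apply NNPP. intros Hn.
  assert (E : countc m (fun j => Reqb (x j) (x i)) = countc m (fun j => Nat.eqb j i)).
  { apply countc_ext. intros j Hj. destruct (Nat.eq_dec j i) as [->|Hji].
    - rewrite Nat.eqb_refl. now apply Reqb_true.
    - rewrite (proj2 (Nat.eqb_neq j i) Hji). apply Bool.not_true_iff_false.
      rewrite Reqb_true. intros E'. apply Hn. now exists j. }
  rewrite countc_eqb in E; [lia|exact Hi].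
Qed.

Lemma ties_of_twins s :
  (forall j, (j < m)%nat -> s j = Eq <-> x j = x i) -> ties m s = 2%nat.
Proof.
  intros H. rewrite <- Htwin. apply ties_countc. intros j Hj. rewrite H, Reqb_true; tauto.
Qed.

Variable dl : R.
Hypothesis Hsep : forall j, (j < m)%nat -> x j <> x i -> dl <= Rabs (x j - x i).

Lemma prob_first_near_twins y : 0 < Rabs (y - x i) < dl / 2 -> prob_first m x i y = / 2.
Proof.
  intros Hy.
  assert (Hfar : forall j, (j < m)%nat -> x j <> x i -> dist_cmp x i y j = Gt).
  { intros j Hj E. rewrite dist_cmp_gap. unfold gap.
    rewrite (Rcompare_mul_same_sign _ (x j - x i) _ (x j - x i)); [apply Rcompare_gt| |].
    - apply (Rsqr_pos_lt (x j - x i)). lra.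
    - apply (Rsqr_pos_lt (x j - x i)). lra.
    - replace (x j + x i - 2 * y) with (x j - x i + - (2 * (y - x i))) by ring.
      rewrite Rmult_comm. apply mul_shift_pos.
      rewrite Rabs_Ropp, Rabs_mult, (Rabs_pos_eq 2) by lra. pose proof (Hsep j Hj E). lra. }
  assert (Hties : forall j, (j < m)%nat -> dist_cmp x i y j = Eq <-> x j = x i).
  { intros j Hj. split; intros H.
    - apply NNPP. intros E. rewrite (Hfar j Hj E) in H. discriminate.
    - now apply dist_cmp_same_position. }
  rewrite prob_first_share, share_first_unbeaten, (ties_of_twins _ Hties).
  - now replace (INR 2) with 2 by (simpl; lra).
  - intros j Hj. destruct (Req_dec (x j) (x i)) as [E|E].
    + now rewrite dist_cmp_same_position.
    + now rewrite Hfar.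
Qed.

Section Moved.

Variables t y : R.
Hypothesis Hmove : 0 < Rabs (t - x i) < dl.
Hypothesis Hfar : forall d, In d (x i :: midpoints x i m) -> Rabs (t - x i) < Rabs (y - d).

Lemma dist_cmp_moved_other j : (j < m)%nat -> x j <> x i ->
  dist_cmp (upd x i t) i y j = dist_cmp x i y j /\ dist_cmp x i y j <> Eq.
Proof.
  intros Hj E. assert (Hji : j <> i) by (intros ->; auto).
  pose proof (Hsep j Hj E) as Hd.
  pose proof (Hfar _ (or_intror (in_midpoints x i m j Hj))) as Hm.
  assert (Ha : 0 < (x j - x i) * (x j - x i + - (t - x i))).
  { apply mul_shift_pos. rewrite Rabs_Ropp. lra. }
  assert (Hb : 0 < (x j + x i - 2 * y) * (x j + x i - 2 * y + (t - x i))).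
  { apply mul_shift_pos.
    replace (x j + x i - 2 * y) with (- (2 * (y - (x j + x i) / 2))) by field.
    rewrite Rabs_Ropp, Rabs_mult, (Rabs_pos_eq 2) by lra. lra. }
  rewrite !dist_cmp_gap. unfold gap. rewrite upd_same, upd_other by exact Hji. split.
  - apply Rcompare_mul_same_sign.
    + replace (x j - t) with (x j - x i + - (t - x i)) by ring. rewrite Rmult_comm. exact Ha.
    + replace (x j + t - 2 * y) with (x j + x i - 2 * y + (t - x i)) by ring.
      rewrite Rmult_comm. exact Hb.
  - intros H. destruct (Rcompare_spec ((x j - x i) * (x j + x i - 2 * y)) 0) as [Z| |];
      try discriminate.
    destruct (Rmult_integral _ _ Z) as [Z'|Z']; [rewrite Z' in Ha|rewrite Z' in Hb]; lra.
Qed.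

Lemma dist_cmp_moved_twin j : j <> i -> x j = x i ->
  dist_cmp (upd x i t) i y j = Rcompare ((t - x i) * (y - x i)) 0.
Proof.
  intros Hji E. pose proof (Hfar (x i) (or_introl eq_refl)) as Hp.
  rewrite dist_cmp_gap. unfold gap. rewrite upd_same, upd_other, E by exact Hji.
  replace ((x i - t) * (x i + t - 2 * y)) with ((t - x i) * (2 * (y - x i) - (t - x i)))
    by ring.
  apply Rcompare_mul_same_sign.
  - apply (Rsqr_pos_lt (t - x i)). intros Z. rewrite Z, Rabs_R0 in Hmove. lra.
  - revert Hp. unfold Rabs. repeat destruct Rcase_abs; intros; nra.
Qed.

Lemma moved_side_nonzero : (t - x i) * (y - x i) <> 0.
Proof.
  pose proof (Hfar (x i) (or_introl eq_refl)).
  intros Z. destruct (Rmult_integral _ _ Z) as [Z'|Z']; rewrite Z', Rabs_R0 in *; lra.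
Qed.

Lemma dist_cmp_moved j : (j < m)%nat ->
  dist_cmp (upd x i t) i y j = dist_cmp x i y j \/
  (dist_cmp x i y j = Eq /\ dist_cmp (upd x i t) i y j = Rcompare ((t - x i) * (y - x i)) 0).
Proof.
  intros Hj. destruct (Nat.eq_dec j i) as [->|Hji].
  - left. now rewrite !dist_cmp_same_position.
  - destruct (Req_dec (x j) (x i)) as [E|E].
    + right. split; [now apply dist_cmp_same_position|now apply dist_cmp_moved_twin].
    + left. now apply dist_cmp_moved_other.
Qed.

Lemma ties_moved : ties m (dist_cmp (upd x i t) i y) = 1%nat.
Proof.
  rewrite <- (countc_eqb m i Hi). apply ties_countc. intros j Hj. rewrite Nat.eqb_eq. split.
  - intros H. destruct (Nat.eq_dec j i) as [|Hji]; auto. exfalso.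
    destruct (Req_dec (x j) (x i)) as [E|E].
    + rewrite dist_cmp_moved_twin in H by auto.
      exact (moved_side_nonzero (Rcompare_eq_inv _ H)).
    + destruct (dist_cmp_moved_other j Hj E) as [E' NE]. rewrite E' in H. exact (NE H).
  - intros ->. now apply dist_cmp_same_position.
Qed.

Lemma ties_before_move : ties m (dist_cmp x i y) = 2%nat.
Proof.
  apply ties_of_twins. intros j Hj. split.
  - intros H. apply NNPP. intros E. exact (proj2 (dist_cmp_moved_other j Hj E) H).
  - apply dist_cmp_same_position.
Qed.

Lemma voter_score_moved_same_side c : 0 < (t - x i) * (y - x i) ->
  voter_score c m (upd x i t) i y = 2 * prob_first m x i y.
Proof.
  intros Hs. destruct twin_exists as [k [Hk [Hki Hxk]]].
  unfold voter_score. rewrite !prob_first_share, prob_last_share.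
  rewrite (share_first_beaten m (fun j => CompOpp (dist_cmp (upd x i t) i y j)) k Hk)
    by (rewrite dist_cmp_moved_twin, Rcompare_gt by auto; reflexivity).
  rewrite (share_first_tie_broken m (dist_cmp x i y));
    [ring| |apply ties_before_move|apply ties_moved].
  intros j Hj. rewrite <- (Rcompare_gt _ Hs). apply dist_cmp_moved, Hj.
Qed.

Lemma voter_score_moved_opposite_side c : (t - x i) * (y - x i) < 0 ->
  voter_score c m (upd x i t) i y = - (2 * c * prob_last m x i y).
Proof.
  intros Hs. destruct twin_exists as [k [Hk [Hki Hxk]]].
  unfold voter_score. rewrite prob_first_share, !prob_last_share.
  rewrite (share_first_beaten m (dist_cmp (upd x i t) i y) k Hk)
    by (rewrite dist_cmp_moved_twin, Rcompare_lt by auto; reflexivity).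
  rewrite (share_first_tie_broken m (fun j => CompOpp (dist_cmp x i y j)));
    [ring| |rewrite ties_CompOpp; apply ties_before_move
           |rewrite ties_CompOpp; apply ties_moved].
  intros j Hj. destruct (dist_cmp_moved j Hj) as [->|[-> ->]]; [now left|right].
  now rewrite Rcompare_lt.
Qed.

End Moved.

Variable c : R.
Hypothesis Hc : 0 <= c.

Lemma score_moved_near : exists K, 0 <= K /\ forall t, 0 < Rabs (t - x i) < dl ->
  Rabs (score c m (upd x i t) i -
        RInt (if Rlt_dec (x i) t then right_integrand c m x i else left_integrand c m x i) 0 1)
  <= K * Rabs (t - x i).
Proof.
  set (D := x i :: midpoints x i m).
  exists ((1 + c + (4 + 4 * c)) * (INR (length D) * 2)).
  split; [pose proof (pos_INR (length D)); nra|]. intros t Ht.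
  replace (_ * Rabs (t - x i)) with ((1 + c + (4 + 4 * c)) * (INR (length D) * (2 * Rabs (t - x i))))
    by ring.
  apply score_near_RInt; [exact Hc|apply Rabs_pos| | |].
  - destruct Rlt_dec; [apply ex_RInt_right_integrand|apply ex_RInt_left_integrand].
  - intros y _. destruct Rlt_dec; [|now apply left_integrand_bound].
    pose proof (right_integrand_bound c m x i y Hc). lra.
  - intros y _ Hfar. pose proof (Hfar (x i) (or_introl eq_refl)) as Hy.
    assert (Hyx : y <> x i) by (intros ->; rewrite Rminus_diag, Rabs_R0 in Hy; lra).
    unfold left_integrand, right_integrand.
    assert (Htx : t <> x i) by (intros ->; rewrite Rminus_diag, Rabs_R0 in Ht; lra).
    destruct (Rlt_dec (x i) t) as [Ht'|Ht'], (Rlt_dec (x i) y) as [Hy'|Hy'];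
      [|assert (y < x i) by lra|assert (t < x i) by lra|assert (t < x i /\ y < x i) by lra].
    + apply voter_score_moved_same_side; auto. nra.
    + apply voter_score_moved_opposite_side; auto. nra.
    + rewrite voter_score_moved_opposite_side by (auto; nra). unfold voter_score. ring.
    + rewrite voter_score_moved_same_side by (auto; nra). unfold voter_score. ring.
Qed.

Hypothesis Hdl : 0 < dl <= 1.

Lemma RInt_prob_first_pos : 0 <= x i <= 1 -> 0 < RInt (prob_first m x i) 0 1.
Proof.
  intros Hp.
  pose proof (ex_RInt_piecewise_constant _ _ 0 1 (prob_first_piecewise_constant m x i)) as Hpf.
  assert (Hnn : forall y, 0 < y < 1 -> 0 <= prob_first m x i y)
    by (intros; rewrite prob_first_share; apply share_first_bounds).
  destruct (Rle_lt_dec (x i) (1 / 2)).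
  - apply Rlt_le_trans with ((x i + dl / 2 - x i) * / 2); [lra|].
    apply RInt_ge_plateau; auto; try lra.
    intros y Hy. rewrite prob_first_near_twins; [lra|]. rewrite Rabs_pos_eq; lra.
  - apply Rlt_le_trans with ((x i - (x i - dl / 2)) * / 2); [lra|].
    apply RInt_ge_plateau; auto; try lra.
    intros y Hy. rewrite prob_first_near_twins; [lra|]. rewrite Rabs_left; lra.
Qed.

Lemma score_le_RInt_prob_first : score c m x i <= RInt (prob_first m x i) 0 1.
Proof.
  rewrite score_RInt. apply RInt_le; [lra|apply ex_RInt_voter_score| |].
  - exact (ex_RInt_piecewise_constant _ _ 0 1 (prob_first_piecewise_constant m x i)).
  - intros y _. unfold voter_score. rewrite prob_last_share.
    pose proof (share_first_bounds m (fun j => CompOpp (dist_cmp x i y j))). nra.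
Qed.

Lemma one_sided_limits_at_equilibrium : nash_eq c m x ->
  left_lim c m x i (x i) (RInt (left_integrand c m x i) 0 1) ->
  right_lim c m x i (x i) (RInt (right_integrand c m x i) 0 1) ->
  RInt (left_integrand c m x i) 0 1 = score c m x i /\
  RInt (right_integrand c m x i) 0 1 = score c m x i.
Proof.
  intros Hnash HL HR. pose proof (proj1 Hnash i Hi) as Hp.
  pose proof (RInt_left_plus_right_integrand c m x i).
  pose proof (RInt_prob_first_pos Hp). pose proof score_le_RInt_prob_first.
  pose proof (ex_RInt_piecewise_constant _ _ 0 1 (prob_first_piecewise_constant m x i)) as Hpf.
  assert (E2 : RInt (fun y => 2 * prob_first m x i y) 0 1 = 2 * RInt (prob_first m x i) 0 1)
    by exact (RInt_scal (prob_first m x i) 0 1 2 Hpf).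
  pose proof (fun H => left_lim_le_score c m x i _ Hi Hnash H HL) as HLle.
  pose proof (fun H => right_lim_le_score c m x i _ Hi Hnash H HR) as HRle.
  destruct (Req_dec (x i) 0) as [E0|N0]; [|destruct (Req_dec (x i) 1) as [E1|N1]].
  - exfalso. assert (RInt (right_integrand c m x i) 0 1 = 2 * RInt (prob_first m x i) 0 1).
    { rewrite <- E2. apply RInt_ext. intros y Hy. rewrite Rmin_left, Rmax_right in Hy by lra.
      apply right_integrand_right; lra. }
    pose proof (HRle ltac:(lra)). lra.
  - exfalso. assert (RInt (left_integrand c m x i) 0 1 = 2 * RInt (prob_first m x i) 0 1).
    { rewrite <- E2. apply RInt_ext. intros y Hy. rewrite Rmin_left, Rmax_right in Hy by lra.
      apply left_integrand_left; lra. }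
    pose proof (HLle ltac:(lra)). lra.
  - pose proof (HLle ltac:(lra)). pose proof (HRle ltac:(lra)). lra.
Qed.

End Twin.

Theorem lemma2 (c : R) (m : nat) (x : nat -> R) (i : nat) :
  0 <= c -> (2 <= m)%nat -> is_profile m x -> (i < m)%nat ->
  (exists j, (j < m)%nat /\ x j <> x i) ->
  countc m (fun j => Reqb (x j) (x i)) = 2%nat ->
  exists Lm Lp,
    left_lim c m x i (x i) Lm /\ right_lim c m x i (x i) Lp /\
    Lm + Lp = 2 * score c m x i /\
    (nash_eq c m x -> non_convergent m x ->
       Lm = score c m x i /\ Lp = score c m x i).
Proof.
  intros Hc _ _ Hi _ Htwin.
  destruct (separation_radius m x (x i)) as [dl [Hdl Hsep]].
  destruct (score_moved_near m x i Hi Htwin dl Hsep c Hc) as [K [HK Hnear]].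
  assert (HL : left_lim c m x i (x i) (RInt (left_integrand c m x i) 0 1)).
  { apply (limit1_in_of_linear_bound _ _ _ _ K dl); [lra|exact HK|]. intros t Ht Htd.
    specialize (Hnear t). destruct Rlt_dec; [lra|].
    apply Hnear. split; [apply Rabs_pos_lt; lra|exact Htd]. }
  assert (HR : right_lim c m x i (x i) (RInt (right_integrand c m x i) 0 1)).
  { apply (limit1_in_of_linear_bound _ _ _ _ K dl); [lra|exact HK|]. intros t Ht Htd.
    specialize (Hnear t). destruct Rlt_dec; [|lra].
    apply Hnear. split; [apply Rabs_pos_lt; lra|exact Htd]. }
  exists (RInt (left_integrand c m x i) 0 1), (RInt (right_integrand c m x i) 0 1).
  split; [exact HL|split; [exact HR|split]].
  - apply RInt_left_plus_right_integrand.
  - intros Hnash _. exact (one_sided_limits_at_equilibrium m x i Hi Htwin dl Hsep c Hc Hdl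
      Hnash HL HR).
Qed.
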